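(* Let $G$ be a finite simple graph with vertices $v_1,\dots,v_n$ ($n\ge 1$) in which no vertex is adjacent to all other vertices, let $d\ge 1$ be an integer, let $G'$ be the graph constructed from $(G,d)$ as described in the context, and let $h=n(n+1)+d$. Then $G$ has domatic number at least $d$ if and only if $G'$ has Hadwiger number at least $h$.
   Context: A dominating set of $G$ is a set $D$ of vertices such that every vertex of $G$ either lies in $D$ or is adjacent to a vertex of $D$. The domatic number of $G$ is the maximum number of pairwise disjoint dominating sets of $G$. The Hadwiger number of a graph is the largest $h$ such that there exist $h$ pairwise disjoint vertex sets, each inducing a connected subgraph, with an edge between every two of them (equivalently, the largest $h$ such that $K_h$ is a minor). Construction of $G'$ from a graph $G$ with vertices $v_1,\dots,v_n$ and an integer $d$: say $v_i$ dominates $v_j$ if $v_i=v_j$ or $v_iv_j$ is an edge of $G$. The vertex set of $G'$ consists of top vertices $t_1,\dots,t_d$, middle vertices $m_1,\dots,m_n$, and bottom vertices $b_{j,k}$ for $1\le j\le n$, $1\le k\le n+1$. Edges: the top vertices form a clique; the middle vertices form an independent set; the bottom vertices form a clique (of size $n(n+1)$); every top vertex is adjacent to every middle vertex; there are no top–bottom edges; middle vertex $m_i$ is adjacent to bottom vertex $b_{j,k}$ if and only if $v_i$ dominates $v_j$ in $G$. *)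

From mathcomp Require Import all_boot.
Set Implicit Arguments. Unset Strict Implicit. Unset Printing Implicit Defensive.

Definition simple_graph (T : finType) (e : rel T) : Prop :=
  symmetric e /\ irreflexive e.

Definition dominating (T : finType) (e : rel T) (D : {set T}) : bool :=
  [forall x, (x \in D) || [exists y in D, e x y]].

Definition has_k_disjoint_dominating (T : finType) (e : rel T) (k : nat) : bool :=
  [exists D : {ffun 'I_k -> {set T}},
     [forall i, dominating e (D i)] &&
     [forall i, forall j, (i != j) ==> [disjoint D i & D j]]].

(* domatic number = max number of pairwise disjoint dominating sets
   (at most #|T| when T is nonempty; k = 0 always qualifies) *)
Definition domatic_number (T : finType) (e : rel T) : nat :=
  \max_(k < #|T|.+1 | has_k_disjoint_dominating e k) k.

Definition induced_connected (T : finType) (e : rel T) (S : {set T}) : bool :=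
  (S != set0) &&
  [forall x in S, forall y in S,
     connect [rel u v | [&& u \in S, v \in S & e u v]] x y].

Definition has_K_minor (T : finType) (e : rel T) (k : nat) : bool :=
  [exists B : {ffun 'I_k -> {set T}},
     [forall i, induced_connected e (B i)] &&
     [forall i, forall j, (i != j) ==>
        ([disjoint B i & B j] && [exists x in B i, exists y in B j, e x y])]].

(* Hadwiger number = largest h with K_h a minor (h <= #|T| since branch sets
   are nonempty and disjoint) *)
Definition hadwiger_number (T : finType) (e : rel T) : nat :=
  \max_(k < #|T|.+1 | has_K_minor e k) k.

Definition dominates (n : nat) (e : rel 'I_n) (i j : 'I_n) : bool :=
  (i == j) || e i j.

(* vertices of G': top t_1..t_d, middle m_1..m_n, bottom b_{j,k} (k < n+1) *)
Definition Gp_vertex (n d : nat) : finType :=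
  ('I_d + ('I_n + ('I_n * 'I_n.+1)))%type.

Definition Gp_adj (n d : nat) (e : rel 'I_n) (x y : Gp_vertex n d) : bool :=
  match x, y with
  | inl i, inl j => i != j
  | inl _, inr (inl _) => true
  | inr (inl _), inl _ => true
  | inr (inl _), inr (inl _) => false
  | inr (inr p), inr (inr q) => p != q
  | inr (inl i), inr (inr p) => dominates e i p.1
  | inr (inr p), inr (inl i) => dominates e i p.1
  | inl _, inr (inr _) => false
  | inr (inr _), inl _ => false
  end.

Definition Gp (n d : nat) (e : rel 'I_n) : rel (Gp_vertex n d) :=
  fun x y => @Gp_adj n d e x y.

From mathcomp Require Import all_boot zify.
Set Implicit Arguments. Unset Strict Implicit. Unset Printing Implicit Defensive.

(* If D_1, ..., D_d are disjoint dominating sets of G, the n(n+1) bottom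
   vertices as singletons together with the d stars {t_l} u {m_i : i in D_l}
   are branch sets of a clique minor of G': a bottom vertex b_{j,k} sees the
   star of D_l through any m_i with i in D_l dominating v_j.
   Conversely, in a clique minor with n(n+1) + d branch sets at most n(n+1)
   of them contain a bottom vertex, so at least d avoid the bottom clique.
   The middle vertices of such a branch set B dominate G: if v_j were not
   dominated, no vertex of B would be adjacent to the row b_{j,1..n+1}, so
   every branch set would need a vertex outside that row, leaving only
   |G'| - (n+1) < n(n+1) + d vertices for them. *)

Lemma card_le_disjoint_meeting (I T : finType) (B : I -> {set T}) (A : {set T})
    (P : {set I}) :
  (forall i j, i != j -> [disjoint B i & B j]) ->
  (forall i, i \in P -> B i :&: A != set0) -> #|P| <= #|A|.
Proof.
move=> disjB meetA.
pose f i := [pick y in B i :&: A].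
have f_some i : i \in P -> exists2 y, y \in B i :&: A & f i = Some y.
  move=> Pi; rewrite /f; case: pickP => [y yBA | none]; first by exists y.
  by case/set0Pn: (meetA i Pi) => y; rewrite none.
have f_inj : {in P &, injective f}.
  move=> i j Pi Pj; have [y /setIP[yBi _] ->] := f_some i Pi.
  have [z /setIP[zBj _] ->] := f_some j Pj; case=> eq_yz; rewrite -eq_yz in zBj.
  by apply/eqP; apply: contraT => /disjB/disjointFr/(_ yBi); rewrite zBj.
rewrite -(card_in_imset f_inj) -(card_imset A (@Some_inj _)).
apply/subset_leq_card/subsetP => _ /imsetP[i Pi ->].
by have [y /setIP[_ yA] ->] := f_some i Pi; apply: imset_f.
Qed.

Lemma leq_bigmax_downclosed (N m : nat) (P : pred nat) :
  0 < m -> (forall k k', k <= k' -> P k' -> P k) -> (forall k, P k -> k <= N) ->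
  (m <= \max_(k < N.+1 | P k) k) = P m.
Proof.
move=> m_gt0 downP boundP; apply/idP/idP => [le_m_max | Pm].
  apply: contraLR le_m_max => notPm; rewrite -ltnNge -(prednK m_gt0) ltnS.
  apply/bigmax_leqP => k Pk; rewrite -ltnS prednK // ltnNge.
  by apply: contra notPm => le_mk; exact: downP le_mk Pk.
have lt_mN : m < N.+1 by rewrite ltnS boundP.
exact: (@leq_bigmax_cond _ (fun k : 'I_N.+1 => P k) val (Ordinal lt_mN)).
Qed.

Section Families.

Variables (X : finType) (p : pred X) (r : rel X).

Definition has_family (k : nat) : bool :=
  [exists F : {ffun 'I_k -> X},
     [forall i, p (F i)] && [forall i, forall j, (i != j) ==> r (F i) (F j)]].

Definition family_on (I : finType) (F : I -> X) : Prop :=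
  (forall i, p (F i)) /\ (forall i j, i != j -> r (F i) (F j)).

Lemma has_familyP (I : finType) :
  reflect (exists F : I -> X, family_on F) (has_family #|I|).
Proof.
apply: (iffP existsP) => [[F /andP[/forallP pF /forallP rF]] | [F [pF rF]]].
  exists (fun i => F (enum_rank i)); split=> // i j neq_ij.
  apply: (implyP (forallP (rF _) _)); apply: contra neq_ij.
  by move=> /eqP/enum_rank_inj ->.
exists [ffun i => F (enum_val i)]; apply/andP; split; apply/forallP => i.
  by rewrite ffunE.
apply/forallP => j; apply/implyP => neq_ij; rewrite !ffunE; apply: rF.
by apply: contra neq_ij => /eqP/enum_val_inj ->.
Qed.

Lemma has_family_le (k k' : nat) : k <= k' -> has_family k' -> has_family k.
Proof.
move=> le_kk'; rewrite -[k']card_ord -[k]card_ord.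
case/has_familyP=> F [pF rF]; apply/has_familyP.
exists (fun i => F (widen_ord le_kk' i)); split=> // i j neq_ij; apply: rF.
by apply: contra neq_ij => /eqP[] eq_ij; apply/eqP/val_inj.
Qed.

End Families.

Section GraphParameters.

Variables (T : finType) (e : rel T).

Definition branch_adjacent (A B : {set T}) : bool :=
  [disjoint A & B] && [exists x in A, exists y in B, e x y].

Lemma branch_adjacent_edge (A B : {set T}) x y :
  [disjoint A & B] -> x \in A -> y \in B -> e x y -> branch_adjacent A B.
Proof.
move=> disjAB xA yB exy; rewrite /branch_adjacent disjAB.
by apply/exists_inP; exists x => //; apply/exists_inP; exists y.
Qed.

Lemma has_K_minorE k :
  has_K_minor e k = has_family (induced_connected e) branch_adjacent k.
Proof. by []. Qed.

Lemma has_k_disjoint_dominatingE k :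
  has_k_disjoint_dominating e k =
  has_family (dominating e) (fun A B : {set T} => [disjoint A & B]) k.
Proof. by []. Qed.

Lemma has_K_minor_card_le k : has_K_minor e k -> k <= #|T|.
Proof.
rewrite has_K_minorE -[k in has_family _ _ k]card_ord.
case/has_familyP=> B [connB adjB].
rewrite -[k]card_ord -(cardsT 'I_k) -(cardsT T).
apply: (card_le_disjoint_meeting (B := B)) => [i j /adjB/andP[] // | i _].
by rewrite setIT; case/andP: (connB i).
Qed.

Lemma has_k_disjoint_dominating_card_le k :
  0 < #|T| -> has_k_disjoint_dominating e k -> k <= #|T|.
Proof.
case/card_gt0P=> x0 _; rewrite has_k_disjoint_dominatingE.
rewrite -[k in has_family _ _ k]card_ord; case/has_familyP=> D [domD disjD].
rewrite -[k]card_ord -(cardsT 'I_k) -(cardsT T).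
apply: (card_le_disjoint_meeting (B := D)) => // i _; rewrite setIT.
apply/set0Pn; have /forallP/(_ x0)/orP[x0D | /exists_inP[y yD _]] := domD i.
  by exists x0.
by exists y.
Qed.

Lemma domatic_number_geq m :
  0 < #|T| -> 0 < m -> (m <= domatic_number e) = has_k_disjoint_dominating e m.
Proof.
move=> T_gt0 m_gt0; apply: leq_bigmax_downclosed => // [k k' le_kk' | k].
  by rewrite !has_k_disjoint_dominatingE; exact: has_family_le.
exact: has_k_disjoint_dominating_card_le.
Qed.

Lemma hadwiger_number_geq m :
  0 < m -> (m <= hadwiger_number e) = has_K_minor e m.
Proof.
move=> m_gt0; apply: leq_bigmax_downclosed => // [k k' le_kk' | k].
  by rewrite !has_K_minorE; exact: has_family_le.
exact: has_K_minor_card_le.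
Qed.

Lemma star_connected (S : {set T}) c : c \in S ->
  (forall x, x \in S -> x != c -> e x c && e c x) -> induced_connected e S.
Proof.
move=> cS adj_c; apply/andP; split; first by apply/set0Pn; exists c.
pose eS := [rel u v | [&& u \in S, v \in S & e u v]].
have connect_c x : x \in S -> connect eS x c /\ connect eS c x.
  move=> xS; have [-> | neq_xc] := eqVneq x c; first by split; exact: connect0.
  have /andP[exc ecx] := adj_c x xS neq_xc.
  by split; apply: connect1; rewrite /= xS cS ?exc ?ecx.
apply/forall_inP => x xS; apply/forall_inP => y yS.
exact: connect_trans (connect_c x xS).1 (connect_c y yS).2.
Qed.

End GraphParameters.

Section HadwigerReduction.

Variables (n d : nat) (e : rel 'I_n).
Hypothesis e_sym : symmetric e.

Local Notation V := (Gp_vertex n d).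
Local Notation G' := (@Gp n d e).
Local Notation h := (n * n.+1 + d).
Local Notation top l := (inl l : V).
Local Notation mid i := (inr (inl i) : V).
Local Notation bot p := (inr (inr p) : V).

Definition bottoms : {set V} := [set bot p | p : 'I_n * 'I_n.+1].

Definition bottom_row (j : 'I_n) : {set V} := [set bot (j, k) | k : 'I_n.+1].

Definition mids (B : {set V}) : {set 'I_n} := [set i | mid i \in B].

Definition star (D : {set 'I_n}) (l : 'I_d) : {set V} :=
  [set x | match x with
           | inl l' => l' == l
           | inr (inl i) => i \in D
           | inr (inr _) => false
           end].

Lemma card_Gp_vertex : #|V| = d + (n + n * n.+1).
Proof. by rewrite !card_sum card_prod !card_ord. Qed.

Lemma card_bottoms : #|bottoms| = n * n.+1.
Proof. by rewrite card_imset ?card_prod ?card_ord // => p q []. Qed.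

Lemma card_bottom_row j : #|bottom_row j| = n.+1.
Proof. by rewrite card_imset ?card_ord // => k k' []. Qed.

Lemma bottom_row_sub j : bottom_row j \subset bottoms.
Proof. by apply/subsetP=> _ /imsetP[k _ ->]; exact: imset_f. Qed.

Lemma disjoint_mids (A B : {set V}) :
  [disjoint A & B] -> [disjoint mids A & mids B].
Proof.
move=> disjAB; rewrite -setI_eq0; apply/eqP/setP=> i; rewrite !inE.
by apply/negbTE/andP=> -[iA]; rewrite (disjointFr disjAB iA).
Qed.

Lemma disjoint_star (D D' : {set 'I_n}) (l l' : 'I_d) :
  l != l' -> [disjoint D & D'] -> [disjoint star D l & star D' l'].
Proof.
move=> neq_ll' disjDD'; rewrite -setI_eq0; apply/eqP/setP=> -[l''|[i|q]].
all: rewrite !inE //.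
  by apply/negbTE; apply: contra neq_ll' => /andP[/eqP-> /eqP->].
by apply/negbTE/andP=> -[iD]; rewrite (disjointFr disjDD' iD).
Qed.

Lemma dominating_dominates (D : {set 'I_n}) j :
  dominating e D -> exists2 i, i \in D & dominates e i j.
Proof.
move/forallP/(_ j)/orP=> [jD | /exists_inP[i iD eji]].
  by exists j; rewrite /dominates ?eqxx.
by exists i; rewrite /dominates 1?e_sym ?eji ?orbT.
Qed.

Lemma Gp_bot_neighbour u p : G' u (bot p) -> u \notin bottoms ->
  exists2 i, u = mid i & dominates e i p.1.
Proof. by case: u => [l|[i|q]] //= dom_ip; [exists i | rewrite imset_f]. Qed.

Lemma Gp_minor_of_disjoint_dominating :
  has_k_disjoint_dominating e d -> has_K_minor G' h.
Proof.
rewrite has_k_disjoint_dominatingE -[d in has_family _ _ d]card_ord.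
case/has_familyP=> D [domD disjD].
have -> : h = #|{: ('I_n * 'I_n.+1) + 'I_d}|.
  by rewrite card_sum card_prod !card_ord.
rewrite has_K_minorE; apply/has_familyP.
exists (fun x => match x with inl p => [set bot p] | inr l => star (D l) l end).
split=> [[p | l] | [p | l] [q | l'] neq_xy].
- by apply: (star_connected (c := bot p)) => [|x /set1P ->]; rewrite ?set11 ?eqxx.
- apply: (star_connected (c := top l)) => [|[l'|[i|q]]]; rewrite !inE //.
  by move=> /eqP ->; rewrite eqxx.
- have neq_pq : p != q by apply: contra neq_xy => /eqP->.
  apply: (branch_adjacent_edge (x := bot p) (y := bot q)); rewrite ?set11 //.
  by rewrite disjoints1 inE; apply: contra neq_pq => /eqP[->].
- have [i iD dom_ip] := dominating_dominates p.1 (domD l').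
  by apply: (branch_adjacent_edge (x := bot p) (y := mid i)); rewrite ?disjoints1 ?inE.
- have [i iD dom_iq] := dominating_dominates q.1 (domD l).
  apply: (branch_adjacent_edge (x := mid i) (y := bot q)); rewrite ?inE //.
  by rewrite disjoint_sym disjoints1 inE.
- have neq_ll' : l != l' by apply: contra neq_xy => /eqP->.
  apply: (branch_adjacent_edge (x := top l) (y := top l')); rewrite ?inE //.
  exact: disjoint_star neq_ll' (disjD _ _ neq_ll').
Qed.

Lemma mids_dominating (B : 'I_h -> {set V}) i0 :
  family_on (induced_connected G') (branch_adjacent G') B ->
  [disjoint B i0 & bottoms] -> dominating e (mids (B i0)).
Proof.
move=> [connB adjB] disj_i0; apply: contraT => /forallPn[x].
rewrite negb_or => /andP[x_mids x_undominated].
have no_mid_dominates i : mid i \in B i0 -> ~~ dominates e i x.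
  move=> iB; rewrite /dominates negb_or; apply/andP; split.
    by apply: contra x_mids => /eqP <-; rewrite inE.
  apply: contra x_undominated => eix.
  by apply/exists_inP; exists i; rewrite ?inE // e_sym.
have off_row y : y \in B i0 -> y \notin bottom_row x.
  move=> yB; apply: contraFN (disjointFr disj_i0 yB).
  exact: subsetP (bottom_row_sub x) y.
(* B i0 reaches every other branch set, never through the row of x. *)
have meet_off_row i : B i :&: ~: bottom_row x != set0.
  have [-> | neq_i] := eqVneq i i0.
    case/andP: (connB i0) => /set0Pn[y yB] _.
    by apply/set0Pn; exists y; rewrite !inE yB off_row.
  have neq_i0 : i0 != i by rewrite eq_sym.
  have /andP[_ /exists_inP[u uB /exists_inP[y yB euy]]] := adjB i0 i neq_i0.
  apply/set0Pn; exists y; rewrite !inE yB /=; apply/imsetP=> -[k _ y_xk].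
  rewrite y_xk in euy.
  have [i' u_mid dom_i'x] := Gp_bot_neighbour euy (negbT (disjointFr disj_i0 uB)).
  by rewrite u_mid in uB; rewrite (negbTE (no_mid_dominates i' uB)) in dom_i'x.
have : #|[set: 'I_h]| <= #|~: bottom_row x|.
  by apply: (card_le_disjoint_meeting (B := B)) => [i j /adjB/andP[] // | i _].
have := cardsC (bottom_row x).
rewrite cardsT card_ord card_bottom_row card_Gp_vertex; lia.
Qed.

Lemma disjoint_dominating_of_Gp_minor :
  has_K_minor G' h -> has_k_disjoint_dominating e d.
Proof.
rewrite has_K_minorE -[h in has_family _ _ h]card_ord; case/has_familyP=> B famB.
have [_ adjB] := famB.
pose S := [set i | [disjoint B i & bottoms]].
have le_d_S : d <= #|S|.
  have : #|~: S| <= #|bottoms|.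
    apply: (card_le_disjoint_meeting (B := B)) => [i j /adjB/andP[] // | i].
    by rewrite !inE -setI_eq0.
  by have := cardsC S; rewrite card_bottoms card_ord; lia.
pose pickS l := enum_val (widen_ord le_d_S l).
rewrite has_k_disjoint_dominatingE -[d in has_family _ _ d]card_ord.
apply/has_familyP; exists (fun l => mids (B (pickS l))).
split=> [l | l l' neq_ll'].
  by apply: mids_dominating famB _; have := enum_valP (widen_ord le_d_S l); rewrite inE.
apply/disjoint_mids; have /adjB/andP[] // : pickS l != pickS l'.
by apply: contra neq_ll' => /eqP/enum_val_inj[] eq_ll'; apply/eqP/val_inj.
Qed.

End HadwigerReduction.

Theorem lemma6 (n : nat) (e : rel 'I_n) (d : nat) :
  simple_graph e ->
  0 < n ->
  (forall v : 'I_n, exists2 u : 'I_n, u != v & ~~ e v u) ->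
  0 < d ->
  (d <= domatic_number e <->
   n * n.+1 + d <= hadwiger_number (@Gp n d e)).
Proof.
move=> [e_sym _] n_gt0 _ d_gt0.
rewrite domatic_number_geq ?card_ord // hadwiger_number_geq ?addn_gt0 ?d_gt0 ?orbT //.
split; [exact: Gp_minor_of_disjoint_dominating | exact: disjoint_dominating_of_Gp_minor].
Qed.
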